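(* For all sufficiently large natural numbers $n$, the number of primes smaller than $n$ is greater than the number of SP numbers smaller than $n$.
   Context: A Square-Prime (SP) number is a positive integer of the form $p a^2$ where $p$ is a prime and $a \ge 2$ is a natural number (i.e. $a \neq 1$). *)

From mathcomp Require Import all_boot.

(* A Square-Prime (SP) number is a positive integer of the form p * a^2 with
   p prime and a >= 2.  Since such m satisfies p <= m and a <= m, the
   existential quantifiers can be bounded, giving a boolean predicate. *)
Definition is_SP (m : nat) : bool :=
  [exists p : 'I_m.+1, exists a : 'I_m.+1,
     [&& prime p, 2 <= a & m == p * a ^ 2]].

Lemma is_SPP (m : nat) :
  reflect (exists p a, [/\ prime p, 2 <= a & m = p * a ^ 2]) (is_SP m).
Proof.
apply: (iffP existsP).
  move=> [p /existsP [a /and3P [Hp Ha /eqP Hm]]].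
  by exists p, a.
move=> [p [a [Hp Ha Hm]]].
have Hp0 : 0 < p by apply: prime_gt0.
have Hpm : p < m.+1.
  rewrite ltnS Hm -{1}(muln1 p) leq_mul2l expn_gt0; apply/orP; right.
  by case: a Ha {Hm}.
have Ham : a < m.+1.
  rewrite ltnS Hm; apply: (@leq_trans (a ^ 2)).
    by rewrite -{1}(expn1 a) leq_pexp2l //; apply: leq_trans Ha.
  by rewrite -{1}(mul1n (a ^ 2)) leq_mul2r Hp0 orbT.
exists (Ordinal Hpm); apply/existsP; exists (Ordinal Ham) => /=.
by rewrite Hp Ha Hm eqxx.
Qed.

Definition prime_count (n : nat) : nat := #|[pred m : 'I_n | prime m]|.
Definition SP_count (n : nat) : nat := #|[pred m : 'I_n | is_SP m]|.

From Stdlib Require Import Reals Lra Lia Psatz.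
From HB Require Import structures.
From mathcomp Require Import all_boot zify.

(* Chebyshev's argument with the integer (30m)! m! / ((15m)! (10m)! (6m)!) gives
   0.89 y - O(ln y) <= psi(y) <= 1.2 y + O(1) for psi(y) = sum_(p^k <= y) ln p, hence
   pi(n) ln n >= 0.85 n for large n.  An SP number below n is p a^2 with a >= 2, so
   #SP(n) <= sum_(a >= 2) pi((n-1)/a^2).  Cut the sum at A ~ (ln n)^2: the terms with
   a > A are at most n/a^2 and add up to O(n/A).  For a <= A, count the primes up to
   z = n/A^2 trivially and the larger ones through psi(x) >= (pi(x) - z) ln z; as
   sum_(a >= 2) 1/a^2 <= 13/20, this gives #SP(n) ln z <= (6/5)(13/20) n + o(n).
   Since ln z ~ ln n, finally #SP(n) ln n <= 0.84 n < pi(n) ln n. *)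

(* floor q - floor (q/2) - floor (q/3) - floor (q/5) + floor (q/30), arranged so that the
   truncated subtraction never truncates *)
Definition cheb_weight q := q + q %/ 30 - (q %/ 2 + q %/ 3 + q %/ 5).

Lemma cheb_weightE q : q + q %/ 30 = q %/ 2 + q %/ 3 + q %/ 5 + cheb_weight q.
Proof. rewrite /cheb_weight; lia. Qed.

Lemma cheb_weight_le1 q : cheb_weight q <= 1.
Proof. rewrite /cheb_weight; lia. Qed.

Lemma cheb_weight_small q : 0 < q < 6 -> cheb_weight q = 1.
Proof. rewrite /cheb_weight; lia. Qed.

Lemma logn_fact_widen p n x : prime p -> n <= x ->
  logn p n`! = \sum_(1 <= k < x.+1) n %/ p ^ k.
Proof.
move=> p_pr le_nx; rewrite logn_fact // [RHS](big_cat_nat _ (n := n.+1)) ?ltnS //=.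
rewrite [X in _ = _ + X]big1_seq ?addn0 // => k /andP[_].
rewrite mem_index_iota => /andP[lt_nk _]; apply: divn_small.
exact: leq_trans lt_nk (ltnW (ltn_expl _ (prime_gt1 p_pr))).
Qed.

Lemma sum_pow_leq p x y : 1 < p -> y <= x ->
  \sum_(1 <= k < x.+1) (p ^ k <= y) = trunc_log p y.
Proof.
move=> p_gt1 le_yx.
have le_ty : trunc_log p y <= y.
  case: y le_yx => [|y] _; first by rewrite trunc_log0.
  exact: leq_trans (ltnW (ltn_expl _ p_gt1)) (trunc_logP p_gt1 (ltn0Sn y)).
transitivity (\sum_(1 <= k < x.+1) (k <= trunc_log p y)).
  apply: eq_big_nat => k /andP[k_gt0 _]; congr (nat_of_bool _).
  apply/idP/idP; first exact: trunc_log_max.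
  case: y {le_yx le_ty} => [|y]; first by rewrite trunc_log0; case: k k_gt0.
  by move=> le_kt; apply: leq_trans (trunc_logP p_gt1 (ltn0Sn y)); rewrite leq_exp2l.
have -> : forall t, \sum_(1 <= k < x.+1) (k <= t) = minn x t.
  elim: x {le_yx} => [|x IHx] t; first by rewrite big_geq // min0n.
  by rewrite big_nat_recr //= IHx; case: (leqP x.+1 t) => ?; lia.
lia.
Qed.

Definition cheb_exponent p m :=
  \sum_(1 <= k < (30 * m).+1) cheb_weight (30 * m %/ p ^ k).

Lemma logn_cheb_quotient p m : prime p ->
  logn p (30 * m)`! + logn p m`! =
  logn p (15 * m)`! + logn p (10 * m)`! + logn p (6 * m)`! + cheb_exponent p m.
Proof.
move=> p_pr.
have logn_part c d : c * d = 30 ->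
    logn p (c * m)`! = \sum_(1 <= k < (30 * m).+1) 30 * m %/ p ^ k %/ d.
  move=> cd; have d_gt0 : 0 < d by case: d cd; rewrite ?muln0.
  rewrite (@logn_fact_widen _ _ (30 * m)) //; last by rewrite -cd mulnAC leq_pmulr.
  by apply: eq_bigr => k _; rewrite -divnMA [p ^ k * d]mulnC divnMA -cd mulnAC mulnK.
rewrite (logn_part 30 1) // (logn_part 15 2) // (logn_part 10 3) // (logn_part 6 5) //.
rewrite (@logn_fact_widen _ _ (30 * m)) ?leq_pmull // /cheb_exponent -!big_split /=.
apply: eq_bigr => k _; rewrite divn1 -cheb_weightE; congr (_ + _).
by rewrite -divnMA [p ^ k * 30]mulnC divnMA mulKn.
Qed.

Lemma cheb_exponent_le p m : prime p -> cheb_exponent p m <= trunc_log p (30 * m).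
Proof.
move=> p_pr; rewrite -(@sum_pow_leq p (30 * m)) ?prime_gt1 //.
apply: leq_sum => k _; case: (leqP (p ^ k) (30 * m)) => [_ | lt_m_pk]; first exact: cheb_weight_le1.
by rewrite divn_small.
Qed.

Lemma trunc_log_le_cheb_exponent p m : prime p ->
  trunc_log p (30 * m) <= cheb_exponent p m + trunc_log p (5 * m).
Proof.
move=> p_pr; have p_gt1 := prime_gt1 p_pr.
rewrite -(@sum_pow_leq p (30 * m)) // -(@sum_pow_leq p (30 * m) (5 * m)) ?leq_mul2r ?orbT //.
rewrite /cheb_exponent -big_split /=; apply: leq_sum => k _.
case: (leqP (p ^ k) (5 * m)) => [_ | lt_5m]; first exact: leq_trans (leq_b1 _) (leq_addl _ _).
case: (leqP (p ^ k) (30 * m)) => //= le_30m.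
have pk_gt0 : 0 < p ^ k by rewrite expn_gt0 prime_gt0.
rewrite cheb_weight_small // divn_gt0 // le_30m ltn_divLR //; lia.
Qed.

(* The primes [p <= y] with [p < K]; [K] only fixes the summation range. *)
Definition nprimes_le K y := \sum_(0 <= p < K) (prime p && (p <= y)).

Lemma nprimes_le_leq K y : nprimes_le K y <= y.
Proof.
apply: (@leq_trans (\sum_(0 <= p < K) ((0 < p) && (p <= y)))).
  by apply: leq_sum => p _; case: (boolP (prime p)) => // /prime_gt0 ->.
suff -> : \sum_(0 <= p < K) ((0 < p) && (p <= y)) = minn K.-1 y by apply: geq_minr.
elim: K => [|K IHK]; first by rewrite big_geq // min0n.
rewrite big_nat_recr //= IHK; case: K {IHK} => [|K] /=; first by rewrite min0n.
by case: (leqP K.+1 y) => ?; lia.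
Qed.

Lemma prime_countE n : prime_count n = \sum_(0 <= p < n) prime p.
Proof.
rewrite /prime_count -sum1_card big_mkord big_mkcond /=.
by apply: eq_bigr => i _; rewrite inE; case: prime.
Qed.

Lemma SP_count_le_sum n :
  SP_count n <= \sum_(2 <= a < n) nprimes_le n (n.-1 %/ a ^ 2).
Proof.
have term_le lo hi i (F : nat -> nat) : lo <= i < hi -> F i <= \sum_(lo <= j < hi) F j.
  case/andP=> le_lo lt_hi; rewrite (big_cat_nat (n := i)) ?(ltnW lt_hi) //=.
  by rewrite [\sum_(i <= _ < hi) _]big_ltn //=; lia.
have -> : SP_count n = \sum_(0 <= m < n | is_SP m) 1.
  by rewrite /SP_count big_mkord -sum1_card.
rewrite big_mkcond /=.
apply: (@leq_trans (\sum_(0 <= m < n) \sum_(2 <= a < n) \sum_(0 <= p < n)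
                      (prime p && (m == p * a ^ 2)))).
  rewrite big_nat_cond [X in _ <= X]big_nat_cond.
  apply: leq_sum => m /andP[/andP[_ lt_mn] _].
  case: (is_SPP m) => // -[p [a [p_pr a_ge2 def_m]]].
  have a_gt0 : 0 < a by case: a a_ge2 {def_m}.
  have le_pm : p <= m by rewrite def_m leq_pmulr // expn_gt0 a_gt0.
  have le_am : a <= m.
    by rewrite def_m (leq_trans _ (leq_pmull _ (prime_gt0 p_pr))) // leq_pmulr.
  apply: leq_trans (term_le 2 n a _ _); last by lia.
  apply: leq_trans (term_le 0 n p _ _); last by lia.
  by rewrite p_pr def_m eqxx.
rewrite exchange_big_nat big_nat_cond [X in _ <= X]big_nat_cond.
apply: leq_sum => a /andP[/andP[a_ge2 _] _].
rewrite exchange_big_nat; apply: leq_sum => p _.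
have count_eq (b : bool) k : \sum_(0 <= m < n) (b && (m == k)) = b && (k < n).
  elim: n {a_ge2} => [|n IHn]; first by rewrite big_geq // andbF.
  by rewrite big_nat_recr //= IHn; case: b {IHn} => //=; case: (ltngtP k n) => ?; lia.
rewrite count_eq leq_divRL ?expn_gt0; last by case: a a_ge2.
by case: prime => //=; lia.
Qed.

Local Open Scope R_scope.

HB.instance Definition _ := Monoid.isComLaw.Build R 0 Rplus
  (fun x y z => esym (Rplus_assoc x y z)) Rplus_comm Rplus_0_l.

Lemma INR_add m n : INR (m + n)%N = INR m + INR n.
Proof. exact: plus_INR. Qed.

Lemma INR_mul m n : INR (m * n)%N = INR m * INR n.
Proof. exact: mult_INR. Qed.

Lemma INR_exp m n : INR (m ^ n)%N = INR m ^ n.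
Proof. by elim: n => [|n IHn] //=; rewrite expnS INR_mul IHn. Qed.

Lemma INR_sum (I : Type) (r : seq I) (P : pred I) (F : I -> nat) :
  INR (\sum_(i <- r | P i) F i)%N = \big[Rplus/0]_(i <- r | P i) INR (F i).
Proof. exact: (big_morph INR INR_add). Qed.

Lemma INR_leq m n : (m <= n)%N -> INR m <= INR n.
Proof. by move/leP; apply: le_INR. Qed.

Lemma INR_ltn m n : (m < n)%N -> INR m < INR n.
Proof. by move/ltP; apply: lt_INR. Qed.

Lemma INR_gt0 n : (0 < n)%N -> 0 < INR n.
Proof. by move/ltP; apply: lt_0_INR. Qed.

Lemma sumR_le (I : Type) (r : seq I) (P : pred I) (F G : I -> R) :
  (forall i, P i -> F i <= G i) ->
  \big[Rplus/0]_(i <- r | P i) F i <= \big[Rplus/0]_(i <- r | P i) G i.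
Proof. by move=> le_FG; apply: (big_ind2 Rle) => [|*|]; [lra | lra | exact: le_FG]. Qed.

Lemma sumR_le_nat m n (F G : nat -> R) :
  (forall i, (m <= i < n)%N -> F i <= G i) ->
  \big[Rplus/0]_(m <= i < n) F i <= \big[Rplus/0]_(m <= i < n) G i.
Proof.
move=> le_FG; rewrite big_nat_cond [X in _ <= X]big_nat_cond.
by apply: (big_ind2 Rle) => [|*|i /andP[/le_FG]] //; lra.
Qed.

Lemma sumR_mull (I : Type) (r : seq I) (P : pred I) (F : I -> R) c :
  \big[Rplus/0]_(i <- r | P i) (c * F i) = c * \big[Rplus/0]_(i <- r | P i) F i.
Proof. by apply: (big_ind2 (fun x y => x = c * y)) => [|? ? ? ? -> ->|//]; lra. Qed.

Lemma sumR_const_nat m n c : \big[Rplus/0]_(m <= i < n) c = INR (n - m) * c.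
Proof.
elim: n => [|n IHn]; first by rewrite big_geq //= Rmult_0_l.
case: (leqP m n) => [le_mn | lt_nm]; last by rewrite big_geq // (_ : n.+1 - m = 0)%N /=; lia || lra.
by rewrite big_nat_recr //= IHn subSn // S_INR; lra.
Qed.

Lemma sumR_delta K j c : (j < K)%N ->
  \big[Rplus/0]_(0 <= i < K) (if i == j then c else 0) = c.
Proof.
move=> lt_jK; rewrite (big_cat_nat (n := j)) ?(ltnW lt_jK) //.
rewrite (@big_ltn _ _ _ j K) // eqxx !big1_seq /=; first lra.
  by move=> i; rewrite mem_index_iota => /andP[lt_ji _]; case: eqP => // E; lia.
by move=> i; rewrite mem_index_iota => /andP[_ lt_ij]; case: eqP => // E; lia.
Qed.

Lemma ln_le x y : 0 < x -> x <= y -> ln x <= ln y.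
Proof. by move=> x_gt0 [/(ln_increasing _ _ x_gt0) /Rlt_le | ->] //; apply: Rle_refl. Qed.

Lemma ln_INR_ge0 n : (0 < n)%N -> 0 <= ln (INR n).
Proof. by move=> n_gt0; rewrite -ln_1; apply: ln_le; [lra | apply: (INR_leq 1)]. Qed.

Lemma ln_le_sub1 x : 0 < x -> ln x <= x - 1.
Proof. by move=> x_gt0; have := exp_ineq1_le (ln x); rewrite exp_ln //; lra. Qed.

Lemma ln_le_2sqrt x : 0 < x -> ln x <= 2 * sqrt x.
Proof.
move=> x_gt0; have sqrt_gt0 := sqrt_lt_R0 _ x_gt0.
have -> : ln x = 2 * ln (sqrt x) by rewrite -{1}(sqrt_sqrt x) ?ln_mult; lra.
by have := ln_le_sub1 _ sqrt_gt0; lra.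
Qed.

Lemma ln_sub_le a b : 0 < a -> 0 < b -> a * (ln b - ln a) <= b - a.
Proof.
move=> a_gt0 b_gt0; have ba_gt0 : 0 < b / a by apply: Rdiv_lt_0_compat.
have -> : ln b = ln a + ln (b / a) by rewrite -ln_mult //; congr ln; field; lra.
have -> : b - a = a * (b / a - 1) by field; lra.
have := ln_le_sub1 _ ba_gt0; move=> ln_ba; apply: Rmult_le_compat_l; lra.
Qed.

Lemma ln_sub_ge a b : 0 < a -> 0 < b -> b - a <= b * (ln b - ln a).
Proof. by move=> a_gt0 b_gt0; have := ln_sub_le _ _ b_gt0 a_gt0; lra. Qed.

Definition lnfact N := ln (INR N`!).

Lemma lnfactS N : lnfact N.+1 = ln (INR N.+1) + lnfact N.
Proof. by rewrite /lnfact factS INR_mul ln_mult //; apply: INR_gt0; rewrite ?fact_gt0. Qed.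

Lemma lnfact_bounds N : (0 < N)%N ->
  INR N * ln (INR N) - INR N <= lnfact N <= INR N * ln (INR N) - INR N + ln (INR N) + 1.
Proof.
elim: N => [//|[|N] IHN] _; first by rewrite /lnfact /= ln_1; lra.
have N_gt0 := INR_gt0 _ (ltn0Sn N).
have [lo hi] := IHN isT.
have le_step := ln_sub_le _ _ N_gt0 (INR_gt0 _ (ltn0Sn N.+1)).
have ge_step := ln_sub_ge _ _ N_gt0 (INR_gt0 _ (ltn0Sn N.+1)).
rewrite lnfactS [INR N.+2]S_INR in le_step ge_step *; split; lra.
Qed.

Definition cheb_const := 30 * ln 30 - 15 * ln 15 - 10 * ln 10 - 6 * ln 6.

Lemma cheb_const_bounds : 26.8 <= cheb_const <= 28.5.
Proof.
have ln_mul a b : 0 < a -> 0 < b -> ln (a * b) = ln a + ln b by exact: ln_mult.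
have e30 : ln 30 = ln 2 + ln 3 + ln 5 by rewrite (_ : 30 = 2 * 3 * 5) ?ln_mul; lra.
have e15 : ln 15 = ln 3 + ln 5 by rewrite (_ : 15 = 3 * 5) ?ln_mul; lra.
have e10 : ln 10 = ln 2 + ln 5 by rewrite (_ : 10 = 2 * 5) ?ln_mul; lra.
have e6 : ln 6 = ln 2 + ln 3 by rewrite (_ : 6 = 2 * 3) ?ln_mul; lra.
have e16 : ln 16 = 4 * ln 2 by rewrite (_ : 16 = 2 * 2 * 2 * 2) ?ln_mul; lra.
have e25 : ln 25 = 2 * ln 5 by rewrite (_ : 25 = 5 * 5) ?ln_mul; lra.
have e24 : ln 24 = 3 * ln 2 + ln 3 by rewrite (_ : 24 = 2 * 2 * 2 * 3) ?ln_mul; lra.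
have e81 : ln 81 = 4 * ln 3 by rewrite (_ : 81 = 3 * 3 * 3 * 3) ?ln_mul; lra.
have e80 : ln 80 = 4 * ln 2 + ln 5 by rewrite (_ : 80 = 2 * 2 * 2 * 2 * 5) ?ln_mul; lra.
(* ln 2, ln 3, ln 5 are pinned down by the near-coincidences 16/15, 25/24 and 81/80. *)
have near a b : 0 < a -> 0 < b -> a * (ln b - ln a) <= b - a <= b * (ln b - ln a).
  by move=> a_gt0 b_gt0; split; [apply: ln_sub_le | apply: ln_sub_ge].
have := near 15 16 ltac:(lra) ltac:(lra); have := near 24 25 ltac:(lra) ltac:(lra).
have := near 80 81 ltac:(lra) ltac:(lra).
by rewrite /cheb_const e30 e15 e10 e6 e16 e25 e24 e81 e80; lra.
Qed.

Definition ln_part n p := if prime p then ln (INR p) * INR (logn p n) else 0.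

Lemma ln_partM a b p : (0 < a)%N -> (0 < b)%N ->
  ln_part (a * b) p = ln_part a p + ln_part b p.
Proof.
move=> a_gt0 b_gt0; rewrite /ln_part; case: prime; last lra.
by rewrite lognM // INR_add; lra.
Qed.

Lemma ln_INR_decomp X n : (0 < n)%N -> (n <= X)%N ->
  ln (INR n) = \big[Rplus/0]_(0 <= p < X.+1) ln_part n p.
Proof.
elim/ltn_ind: n => n IHn n_gt0 le_nX.
case: (ltngtP n 1) => [| n_gt1 | ->]; first by lia.
  have p_pr : prime (pdiv n) by apply: pdiv_prime.
  have def_n : n = (n %/ pdiv n * pdiv n)%N by rewrite divnK // pdiv_dvd.
  have q_gt0 : (0 < n %/ pdiv n)%N by rewrite divn_gt0 ?prime_gt0 // pdiv_leq // ltnW.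
  have lt_qn : (n %/ pdiv n < n)%N by rewrite ltn_Pdiv ?prime_gt1.
  have -> : ln (INR n) = ln (INR (n %/ pdiv n)) + ln (INR (pdiv n)).
    by rewrite {1}def_n INR_mul ln_mult //; apply: INR_gt0 => //; apply: prime_gt0.
  rewrite (IHn _ lt_qn q_gt0); last lia.
  transitivity (\big[Rplus/0]_(0 <= p < X.+1) (ln_part (n %/ pdiv n) p + ln_part (pdiv n) p)).
    rewrite big_split /=; congr (_ + _).
    rewrite -(@sumR_delta X.+1 (pdiv n) (ln (INR (pdiv n)))); last first.
      by rewrite ltnS (leq_trans (pdiv_leq _)) // ltnW.
    apply: eq_bigr => p _; rewrite /ln_part logn_prime //.
    by case: eqP => [-> | _]; rewrite ?p_pr ?Rmult_1_r //=; case: prime; lra.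
  by apply: eq_bigr => p _; rewrite -ln_partM ?pdiv_gt0 // -def_n.
by rewrite ln_1 big1 // => p _; rewrite /ln_part logn1 /=; case: prime; lra.
Qed.

Lemma lnfact_decomp X N : (N <= X)%N ->
  lnfact N = \big[Rplus/0]_(0 <= p < X.+1) ln_part N`! p.
Proof.
elim: N => [|N IHN] le_NX.
  by rewrite /lnfact ln_1 big1 // => p _; rewrite /ln_part logn1 /=; case: prime; lra.
rewrite lnfactS IHN 1?ltnW // (@ln_INR_decomp X N.+1) // -big_split /=.
by apply: eq_bigr => p _; rewrite factS ln_partM ?fact_gt0.
Qed.

Definition psi_part y p := if prime p then ln (INR p) * INR (trunc_log p y) else 0.

Definition psi_upto K y := \big[Rplus/0]_(0 <= p < K) psi_part y p.

Definition psi y := psi_upto y.+1 y.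

Lemma psi_part_ge0 y p : 0 <= psi_part y p.
Proof.
rewrite /psi_part; case: (boolP (prime p)) => [p_pr | _]; last lra.
by apply: Rmult_le_pos; [apply: ln_INR_ge0; apply: prime_gt0 | apply: pos_INR].
Qed.

Lemma psi_uptoE K y : (y < K)%N -> psi_upto K y = psi y.
Proof.
move=> lt_yK; rewrite /psi /psi_upto (big_cat_nat (n := y.+1)) //= [X in _ + X]big1_seq.
  by rewrite Rplus_0_r.
move=> p /andP[_]; rewrite mem_index_iota => /andP[lt_yp _].
rewrite /psi_part (_ : trunc_log p y = 0%N) /=; first by case: prime; lra.
by apply/eqP; rewrite trunc_log_eq0; lia.
Qed.

Lemma psi_le y y' : (y <= y')%N -> psi y <= psi y'.
Proof.
move=> le_yy'; rewrite -(@psi_uptoE y'.+1 y) //; apply: sumR_le => p _; rewrite /psi_part.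
case: (boolP (prime p)) => [p_pr | _]; last lra.
apply: Rmult_le_compat_l; first by apply: ln_INR_ge0; apply: prime_gt0.
exact/INR_leq/leq_trunc_log.
Qed.

Lemma psi_upto_le K y : (0 < y)%N ->
  psi_upto K y <= INR (\sum_(0 <= p < K) prime p) * ln (INR y).
Proof.
move=> y_gt0; rewrite INR_sum Rmult_comm -sumR_mull /psi_upto.
apply: sumR_le => p _; rewrite /psi_part Rmult_comm.
case: (boolP (prime p)) => [p_pr | _] /=; last lra.
have p_gt0 := INR_gt0 _ (prime_gt0 p_pr).
rewrite Rmult_1_r -ln_pow //; apply: ln_le; first exact: pow_lt.
by rewrite -INR_exp; apply/INR_leq/trunc_logP; rewrite ?prime_gt1.
Qed.

Lemma psi_le_sq y : psi y <= INR y * INR y.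
Proof.
case: y => [|y]; first by rewrite /psi /psi_upto big_nat1 /psi_part /=; lra.
have nprimes_le : (\sum_(0 <= p < y.+2) prime p <= y.+2)%N.
  apply: (@leq_trans (\sum_(0 <= p < y.+2) 1)); first by apply: leq_sum => p _; apply: leq_b1.
  by rewrite sum_nat_const_nat muln1 subn0.
have := psi_upto_le y.+2 y.+1 (ltn0Sn y); have := INR_leq _ _ nprimes_le.
have := ln_le_sub1 _ (INR_gt0 _ (ltn0Sn y)); have := ln_INR_ge0 _ (ltn0Sn y).
rewrite /psi [INR y.+2]S_INR; nra.
Qed.

Definition cheb_ln m :=
  lnfact (30 * m) + lnfact m - lnfact (15 * m) - lnfact (10 * m) - lnfact (6 * m).

Definition cheb_part m p := if prime p then ln (INR p) * INR (cheb_exponent p m) else 0.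

Lemma cheb_lnE m : cheb_ln m = \big[Rplus/0]_(0 <= p < (30 * m).+1) cheb_part m p.
Proof.
have le_30 c : (c <= 30)%N -> (c * m <= 30 * m)%N by move=> le_c30; rewrite leq_mul2r le_c30 orbT.
rewrite /cheb_ln !(@lnfact_decomp (30 * m)) ?le_30 ?leq_pmull //.
have : \big[Rplus/0]_(0 <= p < (30 * m).+1) (ln_part (30 * m)`! p + ln_part m`! p) =
       \big[Rplus/0]_(0 <= p < (30 * m).+1) (ln_part (15 * m)`! p + ln_part (10 * m)`! p
                                        + ln_part (6 * m)`! p + cheb_part m p).
  apply: eq_bigr => p _; rewrite /ln_part /cheb_part.
  case: (boolP (prime p)) => [p_pr | _]; last lra.
  by have := congr1 INR (logn_cheb_quotient p m p_pr); rewrite !INR_add; nra.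
by rewrite !big_split /=; lra.
Qed.

Lemma cheb_ln_le_psi m : cheb_ln m <= psi (30 * m).
Proof.
rewrite cheb_lnE; apply: sumR_le => p _; rewrite /cheb_part /psi_part.
case: (boolP (prime p)) => [p_pr | _]; last lra.
apply: Rmult_le_compat_l; first by apply: ln_INR_ge0; apply: prime_gt0.
exact/INR_leq/cheb_exponent_le.
Qed.

Lemma psi_le_cheb_ln m : psi (30 * m) <= cheb_ln m + psi (5 * m).
Proof.
rewrite -(@psi_uptoE (30 * m).+1 (5 * m)); last lia.
rewrite cheb_lnE /psi /psi_upto -big_split; apply: sumR_le => p _ /=.
rewrite /cheb_part /psi_part; case: (boolP (prime p)) => [p_pr | _]; last lra.
rewrite -Rmult_plus_distr_l -INR_add.
apply: Rmult_le_compat_l; first by apply: ln_INR_ge0; apply: prime_gt0.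
exact/INR_leq/trunc_log_le_cheb_exponent.
Qed.

Lemma cheb_ln_bounds m : (0 < m)%N ->
  cheb_const * INR m - 3 * ln (30 * INR m) - 3 <= cheb_ln m <=
  cheb_const * INR m + 2 * ln (30 * INR m) + 2.
Proof.
move=> m_gt0; have m_pos := INR_gt0 _ m_gt0.
have [a1 a2] := lnfact_bounds (30 * m) ltac:(lia).
have [c1 c2] := lnfact_bounds (15 * m) ltac:(lia).
have [d1 d2] := lnfact_bounds (10 * m) ltac:(lia).
have [e1 e2] := lnfact_bounds (6 * m) ltac:(lia).
have [b1 b2] := lnfact_bounds m m_gt0.
have I30 : INR 30 = 30 by rewrite INR_IZR_INZ.
have I15 : INR 15 = 15 by rewrite INR_IZR_INZ.
have I10 : INR 10 = 10 by rewrite INR_IZR_INZ.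
have I6 : INR 6 = 6 by rewrite INR_IZR_INZ.
have ln_mul c : 0 < c -> ln (c * INR m) = ln c + ln (INR m) by move=> c_gt0; rewrite ln_mult.
rewrite !INR_mul ?I30 ?I15 ?I10 ?I6 !ln_mul in a1 a2 c1 c2 d1 d2 e1 e2; try lra.
have : ln 6 <= ln 10 <= ln 15 /\ ln 15 <= ln 30 /\ 0 <= ln 6.
  by rewrite -ln_1; split; [split|split]; apply: ln_le; lra.
rewrite /cheb_ln /cheb_const ln_mul; last lra.
by split; lra.
Qed.

(* 1600000000 = 40000^2 covers y <= 40000 through [psi_le_sq]; the induction needs larger y. *)
Lemma psi_upper y : psi y <= 6 / 5 * INR y + 1600000000.
Proof.
elim/ltn_ind: y => y IHy; have y_ge0 := pos_INR y.
have I200 : INR (200 * 200) = 40000 by rewrite INR_mul [INR 200]INR_IZR_INZ /=; lra.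
case: (leqP y (200 * 200)) => [le_y | lt_y].
  by have := INR_leq _ _ le_y; have := psi_le_sq y; rewrite I200; nra.
have := INR_ltn _ _ lt_y; rewrite I200 => y_big.
pose m := (y %/ 30).+1.
have le_y_30m : (y <= 30 * m)%N by rewrite /m; lia.
have le_30m : (30 * m <= y + 30)%N by rewrite /m; lia.
have lt_5m : (5 * m < y)%N by rewrite /m; lia.
have m_gt0 : (0 < m)%N by [].
have m_pos := INR_gt0 m m_gt0; clearbody m.
have := psi_le _ _ le_y_30m; have := psi_le_cheb_ln m.
have [_ cheb_hi] := cheb_ln_bounds m m_gt0.
have := IHy _ lt_5m; have := INR_leq _ _ le_30m.
rewrite !INR_mul !INR_add [INR 30]INR_IZR_INZ [INR 5]INR_IZR_INZ /= => ? ? ? ?.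
have ln_le_2y : ln (30 * INR m) <= 2 * sqrt (2 * INR y).
  by apply: Rle_trans (ln_le_2sqrt (2 * INR y) _); [apply: ln_le | ]; lra.
have sqrt_small : sqrt (2 * INR y) <= INR y / 100.
  have := sqrt_sqrt (2 * INR y) ltac:(lra); have := sqrt_pos (2 * INR y); nra.
have [_ cheb_const_hi] := cheb_const_bounds.
have : cheb_const * INR m <= 28.5 * INR m by apply: Rmult_le_compat_r; lra.
lra.
Qed.

Lemma psi_lower y : (30 <= y)%N -> 89 / 100 * INR y - 30 - 3 * ln (INR y) <= psi y.
Proof.
move=> y_ge30; pose m := (y %/ 30)%N.
have le_30m : (30 * m <= y)%N by rewrite /m; lia.
have lt_y : (y < 30 * m + 30)%N by rewrite /m; lia.
have m_gt0 : (0 < m)%N by rewrite /m; lia.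
have m_pos := INR_gt0 m m_gt0; clearbody m.
have := psi_le _ _ le_30m; have := cheb_ln_le_psi m.
have [cheb_lo _] := cheb_ln_bounds m m_gt0.
have := INR_leq _ _ le_30m; have := INR_ltn _ _ lt_y.
rewrite !INR_mul !INR_add [INR 30]INR_IZR_INZ /= => ? ? ? ?.
have : ln (30 * INR m) <= ln (INR y) by apply: ln_le; lra.
have [cheb_const_lo _] := cheb_const_bounds.
have : 26.8 * INR m <= cheb_const * INR m by apply: Rmult_le_compat_r; lra.
lra.
Qed.

Lemma prime_count_lower n : (31 <= n)%N ->
  89 / 100 * INR n - 31 - 3 * ln (INR n) <= INR (prime_count n) * ln (INR n).
Proof.
move=> n_ge31; have n1_gt0 : (0 < n.-1)%N by lia.
have := psi_lower n.-1 ltac:(lia); rewrite -(@psi_uptoE n n.-1); last lia.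
have := psi_upto_le n n.-1 n1_gt0; rewrite -prime_countE.
have ln_le_n : ln (INR n.-1) <= ln (INR n) by apply: ln_le; [apply: INR_gt0 | apply: INR_leq]; lia.
have : INR (prime_count n) * ln (INR n.-1) <= INR (prime_count n) * ln (INR n).
  by apply: Rmult_le_compat_l; first exact: pos_INR.
have : INR n.-1 = INR n - 1 by rewrite -{2}(ltn_predK n_ge31) S_INR; lra.
lra.
Qed.

Lemma ln_le_psi_part y z p : prime p -> (0 < z)%N -> (z < p <= y)%N ->
  ln (INR z) <= psi_part y p.
Proof.
move=> p_pr z_gt0 /andP[lt_zp le_py]; rewrite /psi_part p_pr.
have : 1 <= INR (trunc_log p y).
  by apply: (INR_leq 1); rewrite trunc_log_gt0 prime_gt1 //=; lia.
have : ln (INR z) <= ln (INR p) by apply: ln_le; [apply: INR_gt0 | apply: INR_leq; lia].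
have := ln_INR_ge0 _ z_gt0; nra.
Qed.

Lemma nprimes_le_bound K y z : (0 < z)%N -> (y < K)%N ->
  INR (nprimes_le K y) * ln (INR z) <= INR z * ln (INR z) + psi y.
Proof.
move=> z_gt0 lt_yK; have lnz_ge0 := ln_INR_ge0 _ z_gt0.
have : INR (nprimes_le K z) * ln (INR z) <= INR z * ln (INR z).
  by apply: Rmult_le_compat_r => //; apply/INR_leq/nprimes_le_leq.
suff : INR (nprimes_le K y) * ln (INR z) <= INR (nprimes_le K z) * ln (INR z) + psi_upto K y.
  by rewrite psi_uptoE //; lra.
rewrite /nprimes_le /psi_upto !INR_sum ![_ * ln (INR z)]Rmult_comm -!sumR_mull -big_split.
apply: sumR_le => p _ /=; have := psi_part_ge0 y p.
case: (boolP (prime p)) => [p_pr | _] /=; last lra.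
case: (leqP p z) => [le_pz | lt_zp] /=; first by case: (p <= y)%N => /=; lra.
case: (leqP p y) => [le_py | _] /=; last lra.
by have := ln_le_psi_part y z p p_pr z_gt0 ltac:(lia); lra.
Qed.

Lemma sum_inv_sq_le A K : (1 <= A)%N -> (A < K)%N ->
  \big[Rplus/0]_(A.+1 <= a < K) / (INR a * INR a) <=
  2 / (2 * INR A + 1) - 2 / (2 * INR K - 1).
Proof.
move=> A_ge1; elim: K => [//|K IHK] lt_AK.
have K_ge1 : 1 <= INR K by apply: (INR_leq 1); lia.
case: (ltngtP A K) => [lt_AK' | | <-]; [ | lia | ].
  rewrite big_nat_recr ?S_INR /=; last lia.
  (* 1/K^2 <= 4/(4K^2 - 1) = 2/(2K-1) - 2/(2K+1), which telescopes *)
  have : / (INR K * INR K) <= 2 / (2 * INR K - 1) - 2 / (2 * (INR K + 1) - 1).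
    have -> : 2 / (2 * INR K - 1) - 2 / (2 * (INR K + 1) - 1) = / (INR K * INR K - / 4).
      by field; repeat split; nra.
    by apply: Rinv_le_contravar; nra.
  by have := IHK lt_AK'; lra.
by rewrite big_geq // S_INR (_ : 2 * (INR A + 1) - 1 = 2 * INR A + 1); lra.
Qed.

Lemma INR_div_sq_le n a : (0 < a)%N -> INR (n.-1 %/ a ^ 2) <= INR n / (INR a * INR a).
Proof.
move=> a_gt0; have a2_pos : 0 < INR a * INR a by have := INR_gt0 _ a_gt0; nra.
apply: (Rmult_le_reg_r _ _ _ a2_pos); rewrite /Rdiv Rmult_assoc Rinv_l; last lra.
rewrite Rmult_1_r -!INR_mul mulnn; apply: INR_leq.
by apply: leq_trans (leq_divM _ _) _; lia.
Qed.

Lemma SP_head_le n A z : (0 < z)%N -> (2 <= A)%N -> (0 < n)%N ->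
  (\big[Rplus/0]_(2 <= a < A.+1) INR (nprimes_le n (n.-1 %/ a ^ 2))) * ln (INR z) <=
  INR A * INR z * ln (INR z) + 39 / 50 * INR n + 1600000000 * INR A.
Proof.
move=> z_gt0 A_ge2 n_gt0; have lnz_ge0 := ln_INR_ge0 _ z_gt0.
rewrite Rmult_comm -sumR_mull.
apply: (@Rle_trans _ (\big[Rplus/0]_(2 <= a < A.+1)
    (INR z * ln (INR z) + 1600000000 + 6 / 5 * (INR n * / (INR a * INR a))))).
  apply: sumR_le_nat => a /andP[a_ge2 _]; have a_gt0 : (0 < a)%N by lia.
  have lt_n : (n.-1 %/ a ^ 2 < n)%N by apply: leq_ltn_trans (leq_div _ _) _; lia.
  have := nprimes_le_bound _ _ _ z_gt0 lt_n; have := psi_upper (n.-1 %/ a ^ 2).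
  by have := INR_div_sq_le n a a_gt0; rewrite /Rdiv; lra.
rewrite !big_split /= !sumR_const_nat !sumR_mull big_ltn //.
(* sum_(2 <= a <= A) 1/a^2 <= 1/4 + 2/5 = 13/20, and (6/5)(13/20) = 39/50 *)
have := sum_inv_sq_le 2 A.+1 isT A_ge2.
set S := \big[Rplus/0]_(3 <= a < A.+1) _.
have -> : INR 2 = 2 by [].
have -> : INR (A.+1 - 2) = INR A - 1 by rewrite subSS -{2}(ltn_predK A_ge2) S_INR subn1; lra.
have : 0 <= 2 / (2 * INR A.+1 - 1).
  by rewrite S_INR; apply: Rlt_le; apply: Rdiv_lt_0_compat; have := pos_INR A; lra.
move=> ? ?; have : INR n * S <= INR n * (2 / 5) by apply: Rmult_le_compat_l; [apply: pos_INR | lra].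
have := Rmult_le_pos _ _ (pos_INR z) lnz_ge0.
nra.
Qed.

Lemma SP_tail_le n A : (1 <= A)%N -> (A < n)%N ->
  \big[Rplus/0]_(A.+1 <= a < n) INR (nprimes_le n (n.-1 %/ a ^ 2)) <= INR n / INR A.
Proof.
move=> A_ge1 lt_An.
apply: (@Rle_trans _ (\big[Rplus/0]_(A.+1 <= a < n) (INR n * / (INR a * INR a)))).
  apply: sumR_le_nat => a /andP[lt_Aa _].
  have := INR_leq _ _ (nprimes_le_leq n (n.-1 %/ a ^ 2)).
  by have := INR_div_sq_le n a ltac:(lia); rewrite /Rdiv; lra.
have A_pos := INR_gt0 _ A_ge1; have n_ge1 : 1 <= INR n by apply: (INR_leq 1); lia.
have := sum_inv_sq_le A n A_ge1 lt_An; rewrite sumR_mull.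
have : 0 <= 2 / (2 * INR n - 1) by apply: Rlt_le; apply: Rdiv_lt_0_compat; lra.
have -> : 2 / (2 * INR A + 1) = / (INR A + / 2) by field; lra.
have : / (INR A + / 2) <= / INR A by apply: Rinv_le_contravar; lra.
move=> ? ? ?; rewrite /Rdiv; apply: Rmult_le_compat_l; lra.
Qed.

Lemma SP_count_upper n A z : (0 < z)%N -> (2 <= A)%N -> (A < n)%N ->
  INR (SP_count n) * ln (INR z) <=
  (INR A * INR z + INR n / INR A) * ln (INR z) + 39 / 50 * INR n + 1600000000 * INR A.
Proof.
move=> z_gt0 A_ge2 lt_An.
have := SP_count_le_sum n; rewrite (big_cat_nat (n := A.+1)) //; last lia.
move=> /INR_leq; rewrite INR_add !INR_sum => SP_le.
have := SP_head_le n A z z_gt0 A_ge2 ltac:(lia).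
have := SP_tail_le n A ltac:(lia) lt_An.
have lnz_ge0 := ln_INR_ge0 _ z_gt0.
move=> tail head; apply: Rle_trans (Rmult_le_compat_r _ _ _ lnz_ge0 SP_le) _.
have := Rmult_le_compat_r _ _ _ lnz_ge0 tail; lra.
Qed.

Lemma pow_div_ln_le k x : (0 < k)%N -> 1 <= x -> (ln x / INR k) ^ k <= x.
Proof.
move=> k_gt0 x_ge1; have k_pos := INR_gt0 _ k_gt0.
have ln_x_ge0 : 0 <= ln x by rewrite -ln_1; apply: ln_le; lra.
have ln_x : ln x = INR k * (ln x / INR k) by field; lra.
move: (ln x / INR k) ln_x => y ln_x.
have [y_pos | <-] : 0 < y \/ 0 = y by apply: Rle_lt_or_eq; nra.
  apply: Rlt_le; apply: ln_lt_inv; [exact: pow_lt | lra | ].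
  by rewrite ln_pow // ln_x; have := ln_le_sub1 _ y_pos; nra.
by rewrite pow_i; [lra | apply/ltP].
Qed.

Lemma trunc_log_ln p n : (1 < p)%N -> (0 < n)%N ->
  INR (trunc_log p n) * ln (INR p) <= ln (INR n) < (INR (trunc_log p n) + 1) * ln (INR p).
Proof.
move=> p_gt1 n_gt0; have p_pos := INR_gt0 p (ltnW p_gt1).
rewrite -S_INR -!ln_pow //; split.
  by apply: ln_le; [exact: pow_lt | rewrite -INR_exp; apply/INR_leq/trunc_logP].
by apply: ln_increasing; [exact: INR_gt0 | rewrite -INR_exp; apply/INR_ltn/trunc_log_ltn].
Qed.

Lemma ln_le_div100 x : 40000 <= x -> ln x <= x / 100.
Proof.
move=> x_big; have sqrt_sq := sqrt_sqrt x ltac:(lra).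
have := ln_le_2sqrt x ltac:(lra); have := sqrt_pos x; nra.
Qed.

Lemma ln_ge_40000 n : (2 ^ 2 ^ 17 <= n)%N -> 40000 <= ln (INR n).
Proof.
move=> n_big; have pow_gt0 : (0 < 2 ^ 2 ^ 17)%N by rewrite expn_gt0.
have := ln_le _ _ (INR_gt0 _ pow_gt0) (INR_leq _ _ n_big).
have two : INR 2 = 2 by [].
rewrite INR_exp ln_pow two ?INR_exp ?two; last lra.
by rewrite (_ : 2 ^ 17 = 131072); [have := ln_lt_2; lra | ring].
Qed.

Lemma ln_pow4_le n : (2 ^ 2 ^ 17 <= n)%N -> 10000000000 * ln (INR n) ^ 4 <= INR n.
Proof.
move=> n_big; have L_big := ln_ge_40000 n n_big.
have pow_gt0 : (0 < 2 ^ 2 ^ 17)%N by rewrite expn_gt0.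
have n_ge1 : 1 <= INR n by apply: (INR_leq 1); exact: leq_trans pow_gt0 n_big.
have := pow_div_ln_le 8 (INR n) isT n_ge1; clear n_big pow_gt0.
move: (ln (INR n)) L_big => L L_big; rewrite (_ : INR 8 = 8); last by rewrite INR_IZR_INZ.
have -> : (L / 8) ^ 8 = L ^ 4 * (L ^ 4 / 16777216) by field.
have : 2560000000000000000 <= L ^ 4.
  by rewrite (_ : 2560000000000000000 = 40000 ^ 4); [apply: pow_incr; lra | ring].
nra.
Qed.

Lemma trunc_log2_sq_bounds n : (0 < n)%N -> 40000 <= ln (INR n) ->
  2000 * ln (INR n) <= INR (trunc_log 2 n * trunc_log 2 n) <= 4 * (ln (INR n) * ln (INR n)).
Proof.
move=> n_gt0 L_big; have [t_lo t_hi] := trunc_log_ln 2 n isT n_gt0.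
have ln2_hi : ln 2 <= 1 by have := ln_le_sub1 2; lra.
have ln2_lo := ln_lt_2; have t_ge0 := pos_INR (trunc_log 2 n).
rewrite INR_mul; rewrite (_ : INR 2 = 2) // in t_lo t_hi.
move: (ln (INR n)) (INR (trunc_log 2 n)) L_big t_ge0 t_lo t_hi => L t L_big t_ge0 t_lo t_hi.
have t_ge : L - 1 <= t by nra.
have t_le : t <= 2 * L by nra.
by split; nra.
Qed.

Lemma div_sq_ln_lower n A : (0 < A)%N -> 40000 <= ln (INR n) ->
  INR A <= 4 * (ln (INR n) * ln (INR n)) -> 10000000000 * ln (INR n) ^ 4 <= INR n ->
  (0 < n %/ (A * A))%N /\ 93 / 100 * ln (INR n) <= ln (INR (n %/ (A * A))).
Proof.
move=> A_gt0 L_big A_hi n_large; have A_pos := INR_gt0 A A_gt0.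
have n_lt : INR n < INR A * INR A * (INR (n %/ (A * A)) + 1).
  by rewrite -S_INR -!INR_mul mulnC; apply/INR_ltn/ltn_ceil; rewrite muln_gt0 A_gt0.
have n_pos : 0 < INR n by have := pos_INR (n %/ (A * A)); nra.
move: (n %/ (A * A)) n_lt => z n_lt; set L := ln (INR n) in L_big A_hi n_large *.
have z_ge2 : 2 <= INR z.
  have AA_hi : INR A * INR A <= 16 * L ^ 4.
    by rewrite (_ : L ^ 4 = (L * L) * (L * L)); [nra | ring].
  have : INR A * INR A * (INR z + 1) <= 16 * L ^ 4 * (INR z + 1).
    by apply: Rmult_le_compat_r => //; have := pos_INR z; lra.
  have : 0 < L ^ 4 by apply: pow_lt; lra.
  nra.
split; first by apply/ltP/INR_lt; rewrite [INR 0]/=; lra.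
have AA_pos : 0 < INR A * INR A by apply: Rmult_lt_0_compat.
(* n < A^2 (z + 1) <= 2 A^2 z, while ln A = O(ln L) is negligible against L. *)
have : L <= ln (INR A) + ln (INR A) + ln 2 + ln (INR z).
  rewrite -!ln_mult; try lra; try by apply: Rmult_lt_0_compat; lra.
  rewrite /L; apply: ln_le => //.
  have : INR A * INR A * (INR z + 1) <= INR A * INR A * (2 * INR z).
    by apply: Rmult_le_compat_l; lra.
  lra.
have : ln (INR A) <= ln 4 + ln L + ln L.
  by rewrite -!ln_mult; try lra; apply: ln_le; lra.
have := ln_le_sub1 4; have := ln_le_sub1 2; have := ln_le_div100 L L_big; lra.
Qed.

Lemma SP_count_log_upper n : (2 ^ 2 ^ 17 <= n)%N ->
  INR (SP_count n) * ln (INR n) <= 84 / 100 * INR n.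
Proof.
move=> n_big; have L_big := ln_ge_40000 n n_big; have n_large := ln_pow4_le n n_big.
have pow_gt0 : (0 < 2 ^ 2 ^ 17)%N by rewrite expn_gt0.
have n_gt0 := leq_trans pow_gt0 n_big; clear n_big pow_gt0.
(* The cut-off A is about (ln n)^2: large against ln n, negligible against n. *)
have [A_lo A_hi] := trunc_log2_sq_bounds n n_gt0 L_big.
move: (trunc_log 2 n * trunc_log 2 n)%N A_lo A_hi => A A_lo A_hi.
have A_gt0 : (0 < A)%N by apply/ltP/INR_lt; rewrite [INR 0]/=; lra.
have [z_gt0 lz_lo] := div_sq_ln_lower n A A_gt0 L_big A_hi n_large.
have Az_le : INR A * INR A * INR (n %/ (A * A)) <= INR n.
  by rewrite -!INR_mul mulnC; apply/INR_leq/leq_divM.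
have lz_hi : ln (INR (n %/ (A * A))) <= ln (INR n).
  by apply: ln_le; [exact: INR_gt0 | apply/INR_leq/leq_div].
move: (n %/ (A * A)) z_gt0 lz_lo Az_le lz_hi => z z_gt0 lz_lo Az_le lz_hi.
set L := ln (INR n) in L_big n_large A_lo A_hi lz_lo lz_hi *.
have L4 : 1600000000 * (L * L) <= L ^ 4.
  by rewrite (_ : L ^ 4 = (L * L) * (L * L)); [apply: Rmult_le_compat_r; nra | ring].
have A_ge2 : (2 <= A)%N by apply/ltP/INR_lt; rewrite [INR 1]/=; lra.
have A_lt_n : (A < n)%N by apply/ltP/INR_lt; lra.
have := SP_count_upper n A z z_gt0 A_ge2 A_lt_n.
set X := INR A * INR z + INR n / INR A.
have A_pos := INR_gt0 A A_gt0.
have X_ge0 : 0 <= X.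
  apply: Rplus_le_le_0_compat; apply: Rmult_le_pos; try exact: pos_INR.
  exact/Rlt_le/Rinv_0_lt_compat.
have X_A : X * INR A <= 2 * INR n.
  by rewrite /X (_ : _ * INR A = INR A * INR A * INR z + INR n); [lra | field; lra].
have : X * (2000 * L) <= X * INR A by apply: Rmult_le_compat_l.
have : X * ln (INR z) <= X * L by apply: Rmult_le_compat_l.
have : INR (SP_count n) * (93 / 100 * L) <= INR (SP_count n) * ln (INR z).
  by apply: Rmult_le_compat_l; first exact: pos_INR.
lra.
Qed.

Lemma prime_count_log_lower n : (2 ^ 2 ^ 17 <= n)%N ->
  85 / 100 * INR n <= INR (prime_count n) * ln (INR n).
Proof.
move=> n_big; have L_big := ln_ge_40000 n n_big; have n_large := ln_pow4_le n n_big.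
clear n_big; move: L_big n_large; set L := ln (INR n) => L_big n_large.
have L4 : L <= L ^ 4.
  rewrite (_ : L ^ 4 = L * (L * L * L)); last ring.
  have : 1 <= L * L * L by nra.
  nra.
have n_ge31 : (31 <= n)%N.
  by apply/leP/INR_le; rewrite (_ : INR 31 = 31); [lra | rewrite INR_IZR_INZ].
by have := prime_count_lower n n_ge31; rewrite -/L; lra.
Qed.

Lemma SP_count_lt_prime_count n : (2 ^ 2 ^ 17 <= n)%N -> (SP_count n < prime_count n)%N.
Proof.
move=> n_big; have L_pos : 0 < ln (INR n) by have := ln_ge_40000 n n_big; lra.
have pow_gt0 : (0 < 2 ^ 2 ^ 17)%N by rewrite expn_gt0.
have n_pos := INR_gt0 n (leq_trans pow_gt0 n_big).
have := SP_count_log_upper n n_big; have := prime_count_log_lower n n_big.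
by move=> ? ?; apply/ltP/INR_lt/(Rmult_lt_reg_r _ _ _ L_pos); lra.
Qed.

Local Close Scope R_scope.

Theorem corollary1 :
  exists N : nat, forall n : nat, N <= n -> SP_count n < prime_count n.
Proof. by exists (2 ^ 2 ^ 17) => n; apply: SP_count_lt_prime_count. Qed.
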